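(* Let $\Omega_n=\dfrac{\pi^{n/2}}{\Gamma\left(\frac n2+1\right)}$ and \[ \Psi(n)=-\frac{n+1}{2n}\ln\frac n2+\frac{n+2}{2n+2}\ln\frac{n+1}{2}-\frac{\ln 2\pi}{2n(n+1)}. \] Then for every $n\in\mathbb{N}$, \[ \Psi(n)-\frac{1}{3n^3}<\frac1n\ln\Omega_n-\frac1{n+1}\ln\Omega_{n+1}<\Psi(n)-\frac1{3n^3}+\frac1{2n^4}. \]
   Context: $\Omega_n$ is the volume of the unit ball in $\mathbb{R}^n$; $\Gamma$ is Euler's gamma function. *)

From Stdlib Require Import Reals.
From Coquelicot Require Import Coquelicot.
Open Scope R_scope.

Definition Gamma (s : R) : R :=
  RInt_gen (fun t => Rpower t (s - 1) * exp (- t)) (at_right 0) (Rbar_locally p_infty).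

(* Volume of the unit ball in R^n: Omega_n = pi^(n/2) / Gamma(n/2 + 1). *)
Definition Omega (n : nat) : R :=
  Rpower PI (INR n / 2) / Gamma (INR n / 2 + 1).

Definition Psi (n : R) : R :=
  - (n + 1) / (2 * n) * ln (n / 2)
  + (n + 2) / (2 * n + 2) * ln ((n + 1) / 2)
  - ln (2 * PI) / (2 * n * (n + 1)).

(* Write ln Γ(x + 1) = (x + 1/2) ln x - x + ln √(2π) + μ(x).  The shift identity
   μ(x) - μ(x + 1) = (x + 1/2) ln (1 + 1/x) - 1 and the artanh series of ln (1 + 1/x) squeeze
   this difference between the increments of λ(x) = 1/(12x) - 1/(360x³) and of
   λ(x) + 1/(1260x⁵).  Along the half-integers μ(x) → 0: for even 2x by Wallis' product,
   for odd 2x because log-convexity of Γ bounds μ(x) - μ(x + 1/2) by O(1/x).  Telescoping then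
   gives λ(x) ≤ μ(x) ≤ λ(x) + 1/(1260x⁵) for x ∈ {1/2, 1, 3/2, ...}.  Since ln Ω_n =
   (n/2) ln π - ln Γ(n/2 + 1), the difference in the theorem minus Ψ(n) equals
   μ((n+1)/2)/(n+1) - μ(n/2)/n, and the two resulting rational inequalities in n have
   numerators with nonnegative coefficients in n - 1. *)

From Stdlib Require Import Reals Lra Lia Classical.
From Coquelicot Require Import Coquelicot.
Open Scope R_scope.

Lemma at_right_0_lt_1 : at_right 0 (fun a => 0 < a < 1).
Proof.
  exists (mkposreal 1 Rlt_0_1); intros y Hy Hy0.
  change (Rabs (y - 0) < 1) in Hy; rewrite Rminus_0_r in Hy.
  apply Rabs_def2 in Hy; lra.
Qed.

Lemma Rbar_locally_p_infty_gt_1 : Rbar_locally p_infty (fun b => 1 < b).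
Proof. now exists 1. Qed.

Lemma eventually_segment_pos :
  filter_prod (at_right 0) (Rbar_locally p_infty)
    (fun ab => forall x, Rmin (fst ab) (snd ab) <= x <= Rmax (fst ab) (snd ab) -> 0 < x).
Proof.
  apply Filter_prod with (1 := at_right_0_lt_1) (2 := Rbar_locally_p_infty_gt_1).
  intros a b Ha Hb x Hx; simpl in Hx; rewrite Rmin_left in Hx; lra.
Qed.

Lemma filterlim_at_right_continuous (f : R -> R) (x : R) :
  continuous f x -> filterlim f (at_right x) (locally (f x)).
Proof.
  intros Hc; eapply filterlim_filter_le_1; [|exact Hc].
  intros P HP; now apply filter_imp with (2 := HP).
Qed.

Lemma is_RInt_gen_pos_Derive (f df : R -> R) (la lb : R) :
  (forall x, 0 < x -> is_derive f x (df x)) ->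
  (forall x, 0 < x -> continuous df x) ->
  filterlim f (at_right 0) (locally la) ->
  filterlim f (Rbar_locally p_infty) (locally lb) ->
  is_RInt_gen df (at_right 0) (Rbar_locally p_infty) (lb - la).
Proof.
  intros Hd Hc Ha Hb.
  apply is_RInt_gen_ext with (Derive f).
  { eapply filter_imp with (2 := eventually_segment_pos); intros [a b] Hab x Hx.
    apply is_derive_unique, Hd, Hab; simpl in *; lra. }
  apply is_RInt_gen_Derive; auto.
  - eapply filter_imp with (2 := eventually_segment_pos); intros [a b] Hab x Hx.
    exists (df x); now apply Hd, Hab.
  - eapply filter_imp with (2 := eventually_segment_pos); intros [a b] Hab x Hx.
    specialize (Hab x Hx).
    apply continuous_ext_loc with df; [|now apply Hc].
    apply locally_interval with 0 p_infty; simpl; auto.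
    intros y Hy _; symmetry; now apply is_derive_unique, Hd.
Qed.

Lemma is_lim_seq_RInt_of_is_RInt_gen (f : R -> R) (L : R) :
  is_RInt_gen f (at_right 0) (Rbar_locally p_infty) L ->
  is_lim_seq (fun m => RInt f (/ (INR m + 1)) (INR m + 1)) L.
Proof.
  intros H P HP.
  destruct (H P HP) as [Q1 Q2 [eps He] [M HM] HQ].
  destruct (is_lim_seq_INR (fun y => Rmax M (/ eps) < y))
    as [N HN]; [now exists (Rmax M (/ eps))|].
  exists N; intros n Hn; specialize (HN n Hn).
  pose proof (Rmax_l M (/ eps)); pose proof (Rmax_r M (/ eps)).
  pose proof (cond_pos eps).
  assert (Hpos : 0 < INR n + 1) by (pose proof (pos_INR n); lra).
  assert (Hinv : 0 < / (INR n + 1) < eps).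
  { split; [now apply Rinv_0_lt_compat|].
    rewrite <- (Rinv_inv eps); apply Rinv_lt_contravar; [|lra].
    apply Rmult_lt_0_compat; [now apply Rinv_0_lt_compat | lra]. }
  destruct (HQ (/ (INR n + 1)) (INR n + 1)) as [y [Hy Py]].
  - apply He; [|apply Hinv].
    change (Rabs (/ (INR n + 1) - 0) < eps).
    rewrite Rminus_0_r, Rabs_right; lra.
  - apply HM; lra.
  - simpl in Hy; now rewrite (is_RInt_unique _ _ _ _ Hy).
Qed.

Lemma ex_RInt_of_continuous (f : R -> R) (a b : R) :
  (forall x, continuous f x) -> ex_RInt f a b.
Proof. intros Hc; apply (ex_RInt_continuous (V := R_CompleteNormedModule)); auto. Qed.

Lemma RInt_nonneg_continuous (f : R -> R) (a b : R) : a <= b ->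
  (forall x, continuous f x) -> (forall x, 0 <= f x) -> 0 <= RInt f a b.
Proof.
  intros Hab Hc Hf; apply RInt_ge_0; auto using ex_RInt_of_continuous.
Qed.

Lemma is_RInt_gen_pos_gt_0 (f : R -> R) (L : R) :
  (forall x, continuous f x) -> (forall x, 0 <= f x) -> (forall x, 0 < x -> 0 < f x) ->
  is_RInt_gen f (at_right 0) (Rbar_locally p_infty) L -> 0 < L.
Proof.
  intros Hc Hf Hpos HL.
  assert (Hex : forall a b, ex_RInt f a b) by (intros; now apply ex_RInt_of_continuous).
  assert (H12 : 0 < RInt f 1 2).
  { apply RInt_gt_0; [lra | intros x Hx; apply Hpos; lra | auto]. }
  apply Rlt_le_trans with (1 := H12).
  apply is_lim_seq_RInt_of_is_RInt_gen, is_lim_seq_incr_1 in HL.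
  refine (is_lim_seq_le (fun _ => RInt f 1 2) _ _ _ _ (is_lim_seq_const _) HL).
  intros m; rewrite S_INR; pose proof (pos_INR m).
  assert (Ha : / (INR m + 1 + 1) <= 1).
  { rewrite <- Rinv_1; apply Rinv_le_contravar; lra. }
  rewrite <- (RInt_Chasles f (/ (INR m + 1 + 1)) 1), <- (RInt_Chasles f 1 2 (INR m + 1 + 1))
    by auto.
  pose proof (RInt_nonneg_continuous f _ _ Ha Hc Hf).
  pose proof (RInt_nonneg_continuous f 2 (INR m + 1 + 1) ltac:(lra) Hc Hf).
  unfold plus; simpl; lra.
Qed.

Lemma ex_is_RInt_gen_pos_of_bounded (f : R -> R) (M : R) :
  (forall x, continuous f x) -> (forall x, 0 <= f x) ->
  (forall x, 0 <= x -> RInt f 0 x <= M) ->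
  exists L, is_RInt_gen f (at_right 0) (Rbar_locally p_infty) L.
Proof.
  intros Hc Hf HM.
  set (F := fun x => RInt f 0 x).
  assert (HF : forall x, is_derive F x (f x)).
  { intros x; apply (is_derive_RInt f F 0 x); [|apply Hc].
    apply filter_forall; intros b.
    apply (RInt_correct (V := R_CompleteNormedModule)), ex_RInt_of_continuous, Hc. }
  assert (HF0 : F 0 = 0) by (unfold F; rewrite RInt_point; reflexivity).
  assert (Hmono : forall x y, 0 <= x <= y -> F x <= F y).
  { intros x y Hxy; unfold F.
    rewrite <- (RInt_Chasles f 0 x y)
      by now apply ex_RInt_of_continuous.
    pose proof (RInt_nonneg_continuous f x y ltac:(lra) Hc Hf); unfold plus; simpl; lra. }
  set (S := fun v => exists x, 0 <= x /\ v = F x).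
  destruct (completeness S) as [L [Hub Hlub]].
  { exists M; intros v [x [Hx ->]]; auto. }
  { exists (F 0), 0; split; [lra | reflexivity]. }
  exists L; replace L with (L - F 0) by (rewrite HF0; ring).
  apply is_RInt_gen_pos_Derive with F.
  - intros x _; apply HF.
  - intros x _; apply Hc.
  - apply filterlim_at_right_continuous.
    apply (ex_derive_continuous (K := R_AbsRing) (V := R_NormedModule)); eexists; apply HF.
  - apply (proj1 (is_lim_spec F p_infty L)); intros eps; pose proof (cond_pos eps).
    destruct (classic (exists x, 0 <= x /\ L - eps < F x)) as [[x0 [Hx0 Hlt]] | Hn].
    + exists x0; intros x Hx.
      assert (F x0 <= F x) by (apply Hmono; lra).
      assert (F x <= L) by (apply Hub; exists x; split; [lra | reflexivity]).
      rewrite Rabs_left1; lra.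
    + exfalso; assert (L <= L - eps); [|lra].
      apply Hlub; intros v [x [Hx ->]].
      apply Rnot_lt_le; intros Hlt; apply Hn; eauto.
Qed.

Lemma quadratic_nonneg_discr (A B C : R) : 0 <= A ->
  (forall l, 0 <= A * l ^ 2 + 2 * B * l + C) -> B ^ 2 <= A * C.
Proof.
  intros HA H; destruct (Req_dec A 0) as [-> | HA0].
  - destruct (Req_dec B 0) as [-> | HB]; [lra|].
    specialize (H (- (C + 1) / (2 * B))).
    replace (0 * (- (C + 1) / (2 * B)) ^ 2 + 2 * B * (- (C + 1) / (2 * B)) + C)
      with (-1) in H by (field; auto); lra.
  - specialize (H (- B / A)).
    replace (A * (- B / A) ^ 2 + 2 * B * (- B / A) + C) with ((A * C - B ^ 2) / A) in H
      by (field; auto).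
    apply Rmult_le_compat_r with (r := A) in H; [|lra].
    unfold Rdiv in H; rewrite Rmult_assoc, Rinv_l in H; lra.
Qed.

Lemma RInt_Cauchy_Schwarz (w s : R -> R) (a b : R) : a <= b ->
  (forall x, continuous w x) -> (forall x, continuous s x) -> (forall x, 0 <= w x) ->
  RInt (fun x => w x * s x) a b ^ 2 <= RInt w a b * RInt (fun x => w x * s x ^ 2) a b.
Proof.
  intros Hab Hw Hs Hw0.
  assert (Hcw : forall (g : R -> R) x, continuous g x -> continuous (fun y => w y * g y) x).
  { intros g x Hg; apply (continuous_mult (K := R_AbsRing)); auto. }
  assert (Hwi : ex_RInt w a b) by now apply ex_RInt_of_continuous.
  assert (Hws : ex_RInt (fun x => w x * s x) a b)
    by (apply ex_RInt_of_continuous; intros; now apply Hcw).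
  assert (Hws2 : ex_RInt (fun x => w x * s x ^ 2) a b).
  { apply ex_RInt_of_continuous; intros x; apply Hcw, (continuous_comp s (fun u => u ^ 2)); auto.
    apply (ex_derive_continuous (K := R_AbsRing) (V := R_NormedModule)); auto_derive; auto. }
  apply quadratic_nonneg_discr; [now apply RInt_nonneg_continuous|].
  intros l.
  replace (RInt w a b * l ^ 2 + 2 * RInt (fun x => w x * s x) a b * l
           + RInt (fun x => w x * s x ^ 2) a b)
    with (RInt (fun x => plus (scal (l ^ 2) (w x))
                   (plus (scal (2 * l) (w x * s x)) (w x * s x ^ 2))) a b).
  - apply RInt_nonneg_continuous; auto.
    + intros x; apply (continuous_ext (fun y => w y * (l + s y) ^ 2)).
      { intros y; unfold plus, scal; simpl; unfold mult; simpl; ring. }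
      apply Hcw, (continuous_comp (fun y => l + s y) (fun u => u ^ 2)).
      * apply (continuous_plus (K := R_AbsRing) (V := R_NormedModule)); auto.
        apply continuous_const.
      * apply (ex_derive_continuous (K := R_AbsRing) (V := R_NormedModule)); auto_derive; auto.
    + intros x.
      replace (plus (scal (l ^ 2) (w x)) (plus (scal (2 * l) (w x * s x)) (w x * s x ^ 2)))
        with (w x * (l + s x) ^ 2) by (unfold plus, scal; simpl; unfold mult; simpl; ring).
      apply Rmult_le_pos; [auto | apply pow2_ge_0].
  - rewrite !(RInt_plus (V := R_CompleteNormedModule)),
      !(RInt_scal (V := R_CompleteNormedModule)); auto using ex_RInt_plus, ex_RInt_scal.
    unfold plus, scal; simpl; unfold mult; simpl; ring.
Qed.

Lemma is_RInt_gen_Cauchy_Schwarz (w s : R -> R) (A B C : R) :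
  (forall x, continuous w x) -> (forall x, continuous s x) -> (forall x, 0 <= w x) ->
  is_RInt_gen w (at_right 0) (Rbar_locally p_infty) A ->
  is_RInt_gen (fun x => w x * s x) (at_right 0) (Rbar_locally p_infty) B ->
  is_RInt_gen (fun x => w x * s x ^ 2) (at_right 0) (Rbar_locally p_infty) C ->
  B ^ 2 <= A * C.
Proof.
  intros Hw Hs Hw0 HA HB HC.
  apply is_lim_seq_RInt_of_is_RInt_gen in HA, HB, HC.
  assert (HB2 := is_lim_seq_mult' _ _ _ _ HB HB).
  refine (is_lim_seq_le _ _ (B ^ 2) (A * C) _ _ (is_lim_seq_mult' _ _ _ _ HA HC)).
  - intros m; apply RInt_Cauchy_Schwarz; auto.
    pose proof (pos_INR m).
    assert (/ (INR m + 1) <= 1) by (rewrite <- Rinv_1; apply Rinv_le_contravar; lra); lra.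
  - replace (B ^ 2) with (B * B) by ring.
    apply is_lim_seq_ext with (2 := HB2); intros m; simpl; ring.
Qed.

Definition Gamma_half_integrand (j : nat) (t : R) : R := sqrt t ^ j * exp (- t).

Definition Gamma_half (j : nat) : R := Gamma (INR j / 2 + 1).

Lemma Gamma_half_integrand_continuous (j : nat) (x : R) :
  continuous (Gamma_half_integrand j) x.
Proof.
  apply (continuous_mult (fun t => sqrt t ^ j) (fun t => exp (- t))).
  - apply (continuous_comp sqrt (fun u => u ^ j)); [apply continuous_sqrt|].
    apply (ex_derive_continuous (K := R_AbsRing) (V := R_NormedModule)); auto_derive; auto.
  - apply (ex_derive_continuous (K := R_AbsRing) (V := R_NormedModule)); auto_derive; auto.
Qed.

Lemma Gamma_half_integrand_nonneg (j : nat) (t : R) : 0 <= Gamma_half_integrand j t.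
Proof.
  apply Rmult_le_pos; [apply pow_le, sqrt_pos | left; apply exp_pos].
Qed.

Lemma Gamma_half_integrand_pos (j : nat) (t : R) : 0 < t -> 0 < Gamma_half_integrand j t.
Proof.
  intros Ht; apply Rmult_lt_0_compat; [apply pow_lt, sqrt_lt_R0, Ht | apply exp_pos].
Qed.

Lemma pow_le_fact_mul_exp (x : R) (N : nat) :
  0 <= x -> x ^ N <= INR (Factorial.fact N) * exp x.
Proof.
  intros Hx; pose proof (INR_fact_lt_0 N).
  assert (HN : x ^ N / INR (Factorial.fact N) <= exp x).
  { apply Rle_trans with (2 := exp_ge_taylor x N Hx).
    destruct N as [|N]; [simpl; lra|].
    rewrite tech5.
    enough (0 <= sum_f_R0 (fun k => x ^ k / INR (Factorial.fact k)) N) by lra.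
    apply cond_pos_sum; intros k.
    apply Rdiv_le_0_compat; [now apply pow_le | apply INR_fact_lt_0]. }
  apply Rmult_le_compat_l with (r := INR (Factorial.fact N)) in HN; [|lra].
  unfold Rdiv in HN; rewrite Rmult_comm, Rmult_assoc, Rinv_l, Rmult_1_r in HN; lra.
Qed.

Lemma Gamma_half_integrand_lim_p_infty (j : nat) :
  is_lim (Gamma_half_integrand j) p_infty 0.
Proof.
  set (C := INR (Factorial.fact (S j))).
  assert (HC := is_lim_scal_l _ C _ _
                  (is_lim_inv _ _ _ (is_lim_id p_infty) ltac:(discriminate))).
  simpl in HC; rewrite Rmult_0_r in HC.
  apply (is_lim_le_le_loc (fun _ => 0) (fun x => C * / x)); [|apply is_lim_const | exact HC].
  exists 1; intros x Hx; split; [apply Gamma_half_integrand_nonneg|].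
  assert (Hs : 1 <= sqrt x) by (rewrite <- sqrt_1; apply sqrt_le_1_alt; lra).
  assert (Hsx : sqrt x <= x).
  { rewrite <- (sqrt_sqrt x) at 2 by lra; nra. }
  assert (Hexp := pow_le_fact_mul_exp x (S j) ltac:(lra)); fold C in Hexp; simpl in Hexp.
  assert (Hpow : sqrt x ^ j <= x ^ j) by (apply pow_incr; pose proof (sqrt_pos x); lra).
  unfold Gamma_half_integrand; rewrite exp_Ropp.
  pose proof (exp_pos x); pose proof (pow_lt x j ltac:(lra)).
  apply Rle_trans with (x ^ j * / exp x).
  { apply Rmult_le_compat_r; [left; apply Rinv_0_lt_compat|]; lra. }
  apply (Rmult_le_reg_r (x * exp x)); [nra|].
  replace (x ^ j * / exp x * (x * exp x)) with (x * x ^ j) by (field; lra).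
  replace (C * / x * (x * exp x)) with (C * exp x) by (field; lra).
  lra.
Qed.

Lemma is_lim_opp_0 (f : R -> R) (x : Rbar) : is_lim f x 0 -> is_lim (fun y => - f y) x 0.
Proof. intros H; generalize (is_lim_opp f x 0 H); simpl; now rewrite Ropp_0. Qed.

Lemma is_RInt_gen_Gamma_half_integrand_0 :
  is_RInt_gen (Gamma_half_integrand 0) (at_right 0) (Rbar_locally p_infty) 1.
Proof.
  replace 1 with (0 - (- exp (- 0))) by (rewrite Ropp_0, exp_0; ring).
  apply is_RInt_gen_pos_Derive with (f := fun t => - exp (- t)).
  - intros x _; unfold Gamma_half_integrand; auto_derive; auto; simpl; ring.
  - intros x _; apply Gamma_half_integrand_continuous.
  - apply filterlim_at_right_continuous with (f := fun t => - exp (- t)).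
    apply (ex_derive_continuous (K := R_AbsRing) (V := R_NormedModule)); auto_derive; auto.
  - apply (is_lim_opp_0 (fun t => exp (- t)) p_infty).
    apply (is_lim_ext (Gamma_half_integrand 0)), Gamma_half_integrand_lim_p_infty.
    intros t; unfold Gamma_half_integrand; simpl; ring.
Qed.

Lemma RInt_one_plus_mul_exp_opp (x : R) :
  RInt (fun t => (1 + t) * exp (- t)) 0 x = 2 - (x + 2) * exp (- x).
Proof.
  apply is_RInt_unique.
  replace (2 - (x + 2) * exp (- x))
    with (minus (- ((x + 2) * exp (- x))) (- ((0 + 2) * exp (- 0))))
    by (unfold minus, plus, opp; simpl; rewrite Ropp_0, exp_0; ring).
  apply (is_RInt_derive (V := R_CompleteNormedModule) (fun t => - ((t + 2) * exp (- t)))).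
  - intros t _; auto_derive; auto; simpl; ring.
  - intros t _; apply (ex_derive_continuous (K := R_AbsRing) (V := R_NormedModule)).
    auto_derive; auto.
Qed.

Lemma ex_is_RInt_gen_Gamma_half_integrand_1 :
  exists L, is_RInt_gen (Gamma_half_integrand 1) (at_right 0) (Rbar_locally p_infty) L.
Proof.
  apply ex_is_RInt_gen_pos_of_bounded with 2;
    [apply Gamma_half_integrand_continuous | apply Gamma_half_integrand_nonneg|].
  intros x Hx.
  assert (Hcont : forall t, continuous (fun t => (1 + t) * exp (- t)) t).
  { intros t; apply (ex_derive_continuous (K := R_AbsRing) (V := R_NormedModule)).
    auto_derive; auto. }
  apply Rle_trans with (RInt (fun t => (1 + t) * exp (- t)) 0 x).
  - apply RInt_le; auto.
    1, 2: apply ex_RInt_of_continuous; auto using Gamma_half_integrand_continuous.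
    intros t Ht; unfold Gamma_half_integrand; simpl; rewrite Rmult_1_r.
    apply Rmult_le_compat_r; [left; apply exp_pos|].
    rewrite <- (sqrt_sqrt t) at 2 by lra; pose proof (sqrt_pos t); nra.
  - rewrite RInt_one_plus_mul_exp_opp; pose proof (exp_pos (- x)); nra.
Qed.

Lemma is_RInt_gen_Gamma_half_integrand_SS (j : nat) (L : R) :
  is_RInt_gen (Gamma_half_integrand j) (at_right 0) (Rbar_locally p_infty) L ->
  is_RInt_gen (Gamma_half_integrand (S (S j))) (at_right 0) (Rbar_locally p_infty)
    ((INR j / 2 + 1) * L).
Proof.
  intros HL; set (c := INR j / 2 + 1).
  set (g := fun t => - (sqrt t ^ S (S j) * exp (- t))).
  assert (Hg : is_RInt_gen
                 (fun t => Gamma_half_integrand (S (S j)) t - c * Gamma_half_integrand j t)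
                 (at_right 0) (Rbar_locally p_infty) (0 - 0)).
  { apply is_RInt_gen_pos_Derive with g.
    - intros t Ht; unfold g, Gamma_half_integrand, c; auto_derive; auto.
      change (match j with 0%nat => 1 | S _ => INR j + 1 end) with (INR (S j)).
      rewrite S_INR; simpl.
      assert (0 < sqrt t) by (apply sqrt_lt_R0; auto); field; lra.
    - intros t _; apply (continuous_minus (K := R_AbsRing) (V := R_NormedModule));
        [|apply (continuous_scal (K := R_AbsRing) (V := R_NormedModule) (fun _ => c));
          [apply continuous_const|]]; apply Gamma_half_integrand_continuous.
    - replace 0 with (g 0) at 2 by (unfold g; rewrite sqrt_0; simpl; ring).
      apply filterlim_at_right_continuous,
        (continuous_opp (K := R_AbsRing) (V := R_NormedModule)
          (fun t => sqrt t ^ S (S j) * exp (- t))), Gamma_half_integrand_continuous.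
    - apply (is_lim_opp_0 (Gamma_half_integrand (S (S j))) p_infty),
        Gamma_half_integrand_lim_p_infty. }
  assert (H := is_RInt_gen_plus (V := R_NormedModule) _ _ _ _ Hg
                 (is_RInt_gen_scal (V := R_NormedModule) _ c L HL)).
  replace (c * L) with (plus (0 - 0) (scal c L))
    by (unfold plus, scal; simpl; unfold mult; simpl; ring).
  apply is_RInt_gen_ext with (2 := H), filter_forall; intros ab x _.
  unfold plus, scal; simpl; unfold mult; simpl; ring.
Qed.

Lemma ex_is_RInt_gen_Gamma_half_integrand (j : nat) :
  exists L, is_RInt_gen (Gamma_half_integrand j) (at_right 0) (Rbar_locally p_infty) L.
Proof.
  enough (H : forall k, (exists L, is_RInt_gen (Gamma_half_integrand k)
                          (at_right 0) (Rbar_locally p_infty) L) /\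
                       (exists L, is_RInt_gen (Gamma_half_integrand (S k))
                          (at_right 0) (Rbar_locally p_infty) L)) by exact (proj1 (H j)).
  intros k.
  induction k as [|k [[L HL] HL1]]; split.
  - exists 1; apply is_RInt_gen_Gamma_half_integrand_0.
  - apply ex_is_RInt_gen_Gamma_half_integrand_1.
  - exact HL1.
  - exact (ex_intro _ _ (is_RInt_gen_Gamma_half_integrand_SS k L HL)).
Qed.

Lemma is_RInt_gen_Gamma_half (j : nat) :
  is_RInt_gen (Gamma_half_integrand j) (at_right 0) (Rbar_locally p_infty) (Gamma_half j).
Proof.
  destruct (ex_is_RInt_gen_Gamma_half_integrand j) as [L HL].
  replace (Gamma_half j) with L; [exact HL|].
  unfold Gamma_half, Gamma; symmetry; apply (is_RInt_gen_unique (V := R_CompleteNormedModule)).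
  apply is_RInt_gen_ext with (2 := HL).
  eapply filter_imp with (2 := eventually_segment_pos); intros [a b] Hab x Hx.
  assert (Hx0 : 0 < x) by (apply Hab; simpl in *; lra).
  unfold Gamma_half_integrand; f_equal.
  replace (INR j / 2 + 1 - 1) with (/ 2 * INR j) by field.
  rewrite <- Rpower_mult, Rpower_sqrt, Rpower_pow; auto.
  now apply sqrt_lt_R0.
Qed.

Lemma Gamma_half_eq (j : nat) (L : R) :
  is_RInt_gen (Gamma_half_integrand j) (at_right 0) (Rbar_locally p_infty) L ->
  Gamma_half j = L.
Proof.
  intros HL.
  apply (is_RInt_gen_unique (V := R_CompleteNormedModule)) in HL.
  rewrite <- HL; symmetry.
  apply (is_RInt_gen_unique (V := R_CompleteNormedModule)), is_RInt_gen_Gamma_half.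
Qed.

Lemma Gamma_half_0 : Gamma_half 0 = 1.
Proof. apply Gamma_half_eq, is_RInt_gen_Gamma_half_integrand_0. Qed.

Lemma Gamma_half_SS (j : nat) : Gamma_half (S (S j)) = (INR j / 2 + 1) * Gamma_half j.
Proof. apply Gamma_half_eq, is_RInt_gen_Gamma_half_integrand_SS, is_RInt_gen_Gamma_half. Qed.

Lemma Gamma_half_pos (j : nat) : 0 < Gamma_half j.
Proof.
  apply (is_RInt_gen_pos_gt_0 (Gamma_half_integrand j)).
  - apply Gamma_half_integrand_continuous.
  - apply Gamma_half_integrand_nonneg.
  - apply Gamma_half_integrand_pos.
  - apply is_RInt_gen_Gamma_half.
Qed.

Lemma ln_Gamma_half_SS (j : nat) :
  ln (Gamma_half (S (S j))) = ln (INR j / 2 + 1) + ln (Gamma_half j).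
Proof.
  pose proof (pos_INR j); pose proof (Gamma_half_pos j).
  rewrite Gamma_half_SS, ln_mult; lra.
Qed.

Lemma Gamma_half_log_convex (j : nat) :
  Gamma_half (S j) ^ 2 <= Gamma_half j * Gamma_half (S (S j)).
Proof.
  apply (is_RInt_gen_Cauchy_Schwarz (Gamma_half_integrand j) sqrt).
  - apply Gamma_half_integrand_continuous.
  - apply continuous_sqrt.
  - apply Gamma_half_integrand_nonneg.
  - apply is_RInt_gen_Gamma_half.
  - apply is_RInt_gen_ext with (2 := is_RInt_gen_Gamma_half (S j)), filter_forall.
    intros ab t _; unfold Gamma_half_integrand; simpl; ring.
  - apply is_RInt_gen_ext with (2 := is_RInt_gen_Gamma_half (S (S j))), filter_forall.
    intros ab t _; unfold Gamma_half_integrand; simpl; ring.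
Qed.

Lemma ln_Gamma_half_S_bounds (j : nat) :
  ln ((INR j + 2) / 2) / 2 <= ln (Gamma_half (S (S j))) - ln (Gamma_half (S j))
  <= ln ((INR j + 3) / 2) / 2.
Proof.
  assert (Hlc : forall k, 2 * ln (Gamma_half (S k))
                          <= ln (Gamma_half k) + ln (Gamma_half (S (S k)))).
  { intros k; pose proof (Gamma_half_pos k); pose proof (Gamma_half_pos (S k)).
    pose proof (Gamma_half_pos (S (S k))).
    replace (2 * ln (Gamma_half (S k))) with (ln (Gamma_half (S k) ^ 2))
      by (rewrite ln_pow by lra; simpl; ring).
    rewrite <- ln_mult by lra.
    apply ln_le; [apply pow_lt; lra | apply Gamma_half_log_convex]. }
  pose proof (Hlc j); pose proof (Hlc (S j)).
  pose proof (ln_Gamma_half_SS j) as Hj; pose proof (ln_Gamma_half_SS (S j)) as HSj.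
  replace (INR j / 2 + 1) with ((INR j + 2) / 2) in Hj by field.
  replace (INR (S j) / 2 + 1) with ((INR j + 3) / 2) in HSj by (rewrite S_INR; field).
  lra.
Qed.

Definition Wallis (m : nat) : R := RInt (fun x => sin x ^ m) 0 (PI / 2).

Lemma ex_RInt_sin_pow (m : nat) (a b : R) : ex_RInt (fun x => sin x ^ m) a b.
Proof.
  apply ex_RInt_of_continuous; intros x.
  apply (ex_derive_continuous (K := R_AbsRing) (V := R_NormedModule)); auto_derive; auto.
Qed.

Lemma Wallis_0 : Wallis 0 = PI / 2.
Proof.
  unfold Wallis; simpl; rewrite (RInt_const (V := R_CompleteNormedModule)).
  unfold scal; simpl; unfold mult; simpl; ring.
Qed.

Lemma Wallis_1 : Wallis 1 = 1.
Proof.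
  unfold Wallis; apply (is_RInt_unique (V := R_CompleteNormedModule)).
  replace 1 with (minus (- cos (PI / 2)) (- cos 0))
    by (rewrite cos_PI2, cos_0; unfold minus, plus, opp; simpl; ring).
  apply (is_RInt_derive (V := R_CompleteNormedModule) (fun x => - cos x)).
  - intros x _; auto_derive; auto; simpl; ring.
  - intros x _; apply (ex_derive_continuous (K := R_AbsRing) (V := R_NormedModule)).
    auto_derive; auto.
Qed.

(* d/dx (- cos x sin^(m+1) x) = (m+2) sin^(m+2) x - (m+1) sin^m x, and the boundary
   terms vanish at 0 and π/2. *)
Lemma Wallis_SS (m : nat) : (INR m + 2) * Wallis (S (S m)) = (INR m + 1) * Wallis m.
Proof.
  set (df := fun x => (INR m + 2) * sin x ^ S (S m) - (INR m + 1) * sin x ^ m).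
  assert (H : is_RInt df 0 (PI / 2)
                (minus (- (cos (PI / 2) * sin (PI / 2) ^ S m)) (- (cos 0 * sin 0 ^ S m)))).
  { apply (is_RInt_derive (V := R_CompleteNormedModule) (fun x => - (cos x * sin x ^ S m))).
    - intros x _; unfold df; auto_derive; auto.
      change (match m with 0%nat => 1 | S _ => INR m + 1 end) with (INR (S m)).
      rewrite S_INR; simpl; pose proof (sin2_cos2 x) as Hc; unfold Rsqr in Hc.
      replace (cos x * (1 * cos x * ((INR m + 1) * sin x ^ m)))
        with ((cos x * cos x) * ((INR m + 1) * sin x ^ m)) by ring.
      replace (cos x * cos x) with (1 - sin x * sin x) by lra; ring.
    - intros x _; unfold df.
      apply (ex_derive_continuous (K := R_AbsRing) (V := R_NormedModule)); auto_derive; auto. }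
  rewrite cos_PI2, sin_0, cos_0 in H.
  apply (is_RInt_unique (V := R_CompleteNormedModule)) in H; unfold df in H.
  rewrite (RInt_minus (V := R_CompleteNormedModule)) in H
    by (apply (ex_RInt_scal (V := R_NormedModule)), ex_RInt_sin_pow).
  rewrite !(RInt_scal (V := R_CompleteNormedModule)) in H by apply ex_RInt_sin_pow.
  unfold minus, plus, opp, scal in H; simpl in H; unfold mult in H; simpl in H.
  unfold Wallis; simpl; lra.
Qed.

Lemma Wallis_S_le (m : nat) : Wallis (S m) <= Wallis m.
Proof.
  apply RInt_le; [pose proof PI_RGT_0; lra | apply ex_RInt_sin_pow | apply ex_RInt_sin_pow|].
  intros x Hx; simpl.
  assert (0 <= sin x) by (apply sin_ge_0; lra).
  assert (0 <= sin x ^ m) by now apply pow_le.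
  pose proof (SIN_bound x); nra.
Qed.

Lemma Wallis_nonneg (m : nat) : 0 <= Wallis m.
Proof.
  apply RInt_ge_0; [pose proof PI_RGT_0; lra | apply ex_RInt_sin_pow|].
  intros x Hx; apply pow_le, sin_ge_0; lra.
Qed.

Lemma Wallis_mul_S (m : nat) : Wallis m * Wallis (S m) = PI / (2 * (INR m + 1)).
Proof.
  enough (Hprod : (INR m + 1) * Wallis m * Wallis (S m) = PI / 2).
  { pose proof (pos_INR m).
    apply (Rmult_eq_reg_l (INR m + 1)); [|lra]; rewrite <- Rmult_assoc, Hprod; field; lra. }
  induction m as [|m IHm].
  - rewrite Wallis_0, Wallis_1; simpl; ring.
  - rewrite <- IHm, S_INR.
    replace ((INR m + 1 + 1) * Wallis (S m) * Wallis (S (S m)))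
      with (Wallis (S m) * ((INR m + 2) * Wallis (S (S m)))) by ring.
    rewrite Wallis_SS; ring.
Qed.

Lemma Wallis_sqr_bounds (m : nat) : (1 <= m)%nat ->
  PI / (2 * (INR m + 1)) <= Wallis m ^ 2 <= PI / (2 * INR m).
Proof.
  intros Hm; destruct m as [|m]; [lia|].
  rewrite <- (Wallis_mul_S (S m)).
  replace (PI / (2 * INR (S m))) with (Wallis m * Wallis (S m))
    by (rewrite Wallis_mul_S, S_INR; reflexivity).
  simpl; rewrite Rmult_1_r; split.
  - apply Rmult_le_compat_l; [apply Wallis_nonneg | apply Wallis_S_le].
  - rewrite (Rmult_comm (Wallis m)).
    apply Rmult_le_compat_l; [apply Wallis_nonneg | apply Wallis_S_le].
Qed.

(* Γ(2k+1) = (2k)! and Γ(k+1) = k!: this is W_(2k) = (π/2) (2k)! / (4^k k!^2). *)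
Lemma Wallis_even (k : nat) :
  Wallis (2 * k) * (4 ^ k * Gamma_half (2 * k) ^ 2) = PI / 2 * Gamma_half (4 * k).
Proof.
  induction k as [|k IHk].
  - simpl; rewrite Wallis_0, Gamma_half_0; ring.
  - replace (2 * S k)%nat with (S (S (2 * k))) by lia.
    replace (4 * S k)%nat with (S (S (S (S (4 * k))))) by lia.
    pose proof (pos_INR (2 * k)); pose proof (pos_INR k); pose proof PI_RGT_0.
    replace (Wallis (S (S (2 * k))))
      with ((INR (2 * k) + 1) / (INR (2 * k) + 2) * Wallis (2 * k))
      by (apply (Rmult_eq_reg_l (INR (2 * k) + 2)); [rewrite Wallis_SS; field|]; lra).
    rewrite !Gamma_half_SS.
    replace (Gamma_half (4 * k))
      with (Wallis (2 * k) * (4 ^ k * Gamma_half (2 * k) ^ 2) / (PI / 2))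
      by (rewrite IHk; field; lra).
    rewrite !S_INR, !mult_INR; simpl; field; lra.
Qed.

Lemma Wallis_inequality (k : nat) : (1 <= k)%nat ->
  2 * INR k / (2 * INR k + 1)
  <= PI * INR k * (Gamma_half (4 * k) / (4 ^ k * Gamma_half (2 * k) ^ 2)) ^ 2 <= 1.
Proof.
  intros Hk; assert (Hk' := le_INR 1 k Hk); simpl in Hk'.
  pose proof PI_RGT_0; pose proof (Gamma_half_pos (2 * k)).
  set (c := Gamma_half (4 * k) / (4 ^ k * Gamma_half (2 * k) ^ 2)).
  assert (HW : Wallis (2 * k) = PI / 2 * c).
  { assert (0 < 4 ^ k) by (apply pow_lt; lra).
    assert (0 < 4 ^ k * Gamma_half (2 * k) ^ 2)
      by (apply Rmult_lt_0_compat; [|apply pow_lt]; lra).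
    unfold c; apply (Rmult_eq_reg_r (4 ^ k * Gamma_half (2 * k) ^ 2));
      [rewrite Wallis_even; field|]; lra. }
  assert (H2k : INR (2 * k) = 2 * INR k) by (rewrite mult_INR; simpl; ring).
  destruct (Wallis_sqr_bounds (2 * k) ltac:(lia)) as [Hlo Hhi].
  rewrite HW, H2k in *.
  replace (PI * INR k * c ^ 2) with ((PI / 2 * c) ^ 2 * (4 * INR k / PI)) by (field; lra).
  split.
  - apply Rle_trans with (PI / (2 * (2 * INR k + 1)) * (4 * INR k / PI)); [right; field; lra|].
    apply Rmult_le_compat_r; [apply Rdiv_le_0_compat|]; lra.
  - apply Rle_trans with (PI / (2 * (2 * INR k)) * (4 * INR k / PI)); [|right; field; lra].
    apply Rmult_le_compat_r; [apply Rdiv_le_0_compat|]; lra.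
Qed.

Lemma ln_le_sub_1 (x : R) : 0 < x -> ln x <= x - 1.
Proof. intros Hx; pose proof (exp_ineq1_le (ln x)); rewrite exp_ln in *; lra. Qed.

Lemma ln_sub_bounds (x y : R) : 0 < x -> 0 < y -> (y - x) / y <= ln y - ln x <= (y - x) / x.
Proof.
  intros Hx Hy; split.
  - pose proof (ln_le_sub_1 (x / y) ltac:(now apply Rdiv_lt_0_compat)).
    rewrite ln_div in * by lra.
    replace ((y - x) / y) with (- (x / y - 1)) by (field; lra); lra.
  - pose proof (ln_le_sub_1 (y / x) ltac:(now apply Rdiv_lt_0_compat)).
    rewrite ln_div in * by lra.
    replace ((y - x) / x) with (y / x - 1) by (field; lra); lra.
Qed.

(* With x = j/2 this is ln Γ(x + 1) - ((x + 1/2) ln x - x + ln √(2π)), the error in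
   Stirling's formula. *)
Definition stirling_error (j : nat) : R :=
  ln (Gamma_half j) - (INR j / 2 + / 2) * ln (INR j / 2) + INR j / 2 - ln (2 * PI) / 2.

Lemma stirling_error_SS (j : nat) : (1 <= j)%nat ->
  stirling_error j - stirling_error (S (S j))
  = (INR j / 2 + / 2) * ln (1 + 1 / (INR j / 2)) - 1.
Proof.
  intros Hj; apply (le_INR 1) in Hj; simpl in Hj.
  unfold stirling_error; rewrite ln_Gamma_half_SS.
  replace (INR (S (S j)) / 2) with (INR j / 2 + 1) by (rewrite !S_INR; field).
  replace (1 + 1 / (INR j / 2)) with ((INR j / 2 + 1) / (INR j / 2)) by (field; lra).
  rewrite (ln_div (INR j / 2 + 1)) by lra; ring.
Qed.

Lemma stirling_error_S_SS_abs_le (j : nat) :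
  Rabs (stirling_error (S j) - stirling_error (S (S j))) <= 1 / (INR j + 1).
Proof.
  set (a := INR (S j) / 2).
  assert (Ha : 0 < a) by (unfold a; rewrite S_INR; pose proof (pos_INR j); lra).
  destruct (ln_Gamma_half_S_bounds j) as [Hd1 Hd2].
  replace ((INR j + 2) / 2) with (a + 1 / 2) in Hd1 by (unfold a; rewrite S_INR; field).
  replace ((INR j + 3) / 2) with (a + 1) in Hd2 by (unfold a; rewrite S_INR; field).
  destruct (ln_sub_bounds a (a + 1 / 2)) as [HL1 HL1']; try lra.
  destruct (ln_sub_bounds (a + 1 / 2) (a + 1)) as [_ HL2]; try lra.
  replace (a + 1 / 2 - a) with (1 / 2) in HL1, HL1' by ring.
  replace (a + 1 - (a + 1 / 2)) with (1 / 2) in HL2 by field.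
  set (L1 := ln (a + 1 / 2) - ln a) in *.
  assert (HP1 : 1 / 2 <= (a + 1 / 2) * L1).
  { replace (1 / 2) with ((a + 1 / 2) * (1 / 2 / (a + 1 / 2))) at 1 by (field; lra).
    apply Rmult_le_compat_l; lra. }
  assert (HP2 : (a + 1 / 2) * L1 <= 1 / 2 + 1 / (4 * a)).
  { replace (1 / 2 + 1 / (4 * a)) with ((a + 1 / 2) * (1 / 2 / a)) by (field; lra).
    apply Rmult_le_compat_l; lra. }
  assert (Hdiff : stirling_error (S j) - stirling_error (S (S j))
                  = (a + 1 / 2) * L1 + ln (a + 1 / 2) / 2
                    - (ln (Gamma_half (S (S j))) - ln (Gamma_half (S j))) - 1 / 2).
  { unfold stirling_error, L1; fold a.
    replace (INR (S (S j)) / 2) with (a + 1 / 2) by (unfold a; rewrite !S_INR; field).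
    field. }
  assert (1 / (4 * a) <= 1 / (2 * a)).
  { apply Rmult_le_compat_l; [lra | apply Rinv_le_contravar; lra]. }
  assert (1 / 2 / (a + 1 / 2) <= 1 / (2 * a) * 2).
  { replace (1 / (2 * a) * 2) with (1 / 2 / (a / 2)) by (field; lra).
    apply Rmult_le_compat_l; [lra | apply Rinv_le_contravar; lra]. }
  replace (1 / (INR j + 1)) with (1 / (2 * a)) by (unfold a; rewrite S_INR; field;
    pose proof (pos_INR j); lra).
  apply Rabs_le; lra.
Qed.

Lemma le_of_is_derive_nonneg (f df : R -> R) (a b : R) : a <= b ->
  (forall t, a <= t <= b -> is_derive f t (df t)) ->
  (forall t, a <= t <= b -> 0 <= df t) -> f a <= f b.
Proof.
  intros Hab Hd Hp.
  destruct (MVT_gen f a b df) as [c [Hc Heq]].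
  - intros x Hx; rewrite Rmin_left, Rmax_right in Hx by lra; apply Hd; lra.
  - intros x Hx; rewrite Rmin_left, Rmax_right in Hx by lra.
    apply continuity_pt_filterlim, (ex_derive_continuous (K := R_AbsRing) (V := R_NormedModule)).
    exists (df x); apply Hd; lra.
  - rewrite Rmin_left, Rmax_right in Hc by lra.
    assert (0 <= df c) by (apply Hp; lra); nra.
Qed.

Lemma two_atanh_ge_series (y : R) : 0 <= y < 1 ->
  2 * (y + y ^ 3 / 3 + y ^ 5 / 5) <= ln (1 + y) - ln (1 - y).
Proof.
  intros Hy.
  set (f := fun t => ln (1 + t) - ln (1 - t) - 2 * (t + t ^ 3 / 3 + t ^ 5 / 5)).
  enough (f 0 <= f y) by (unfold f in *; rewrite Rplus_0_r, Rminus_0_r, ln_1 in *; lra).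
  apply le_of_is_derive_nonneg with (fun t => 2 * t ^ 6 / (1 - t ^ 2)); [lra| |].
  - intros t Ht; unfold f; auto_derive; [lra | field; nra].
  - intros t Ht; apply Rdiv_le_0_compat; [pose proof (pow_le t 6); lra | nra].
Qed.

Lemma two_atanh_le_series (y : R) : 0 <= y < 1 ->
  ln (1 + y) - ln (1 - y) <= 2 * (y + y ^ 3 / 3 + y ^ 5 / 5 + y ^ 7 / (7 * (1 - y ^ 2))).
Proof.
  intros Hy.
  set (f := fun t => 2 * (t + t ^ 3 / 3 + t ^ 5 / 5 + t ^ 7 / (7 * (1 - t ^ 2)))
                     - (ln (1 + t) - ln (1 - t))).
  enough (f 0 <= f y) by (unfold f in *; rewrite Rplus_0_r, Rminus_0_r, ln_1 in *;
    replace (0 ^ 7 / (7 * (1 - 0 ^ 2))) with 0 in * by (simpl; field); simpl in *; lra).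
  apply le_of_is_derive_nonneg with (fun t => 4 * t ^ 8 / (7 * (1 - t ^ 2) ^ 2)); [lra| |].
  - intros t Ht; unfold f; auto_derive; [repeat split; nra | field; nra].
  - intros t Ht; apply Rdiv_le_0_compat; [pose proof (pow_le t 8); lra|].
    assert (Ht2 : 0 < 1 - t ^ 2) by nra; pose proof (pow_lt _ 2 Ht2); lra.
Qed.

Lemma ln_one_add_inv_atanh (x : R) : 0 < x ->
  (x + / 2) * ln (1 + 1 / x)
  = (ln (1 + / (2 * x + 1)) - ln (1 - / (2 * x + 1))) / (2 * / (2 * x + 1)).
Proof.
  intros Hx.
  assert (Hy : 0 < / (2 * x + 1) < 1).
  { split; [apply Rinv_0_lt_compat; lra|].
    rewrite <- Rinv_1; apply Rinv_lt_contravar; lra. }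
  rewrite <- ln_div by lra.
  replace ((1 + / (2 * x + 1)) / (1 - / (2 * x + 1))) with (1 + 1 / x) by (field; lra).
  field; lra.
Qed.

Definition stirling_lo (x : R) : R := 1 / (12 * x) - 1 / (360 * x ^ 3).
Definition stirling_hi (x : R) : R := stirling_lo x + 1 / (1260 * x ^ 5).

(* Rational inequalities are proved by clearing denominators: the numerator, written in
   t = x - x0 >= 0 for the left end x0 of the range, has nonnegative coefficients. *)
Ltac horner_nonneg :=
  match goal with
  | |- 0 <= ?c + ?t * ?r =>
      apply Rplus_le_le_0_compat; [lra | apply Rmult_le_pos; [lra | horner_nonneg]]
  | |- _ => lra
  end.

Lemma Rle_0_of_mul_pos (e D N : R) : 0 < D -> e * D = N -> 0 <= N -> 0 <= e.
Proof. intros HD <- HN; nra. Qed.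

Lemma Rlt_0_of_mul_pos (e D N : R) : 0 < D -> e * D = N -> 0 < N -> 0 < e.
Proof. intros HD <- HN; nra. Qed.

Lemma stirling_lo_step_le_series (x : R) : 1 / 2 <= x ->
  stirling_lo x - stirling_lo (x + 1) <= (/ (2 * x + 1)) ^ 2 / 3 + (/ (2 * x + 1)) ^ 4 / 5.
Proof.
  intros Hx; set (t := x - 1 / 2); assert (Ht : 0 <= t) by (unfold t; lra).
  enough (0 <= (/ (2 * x + 1)) ^ 2 / 3 + (/ (2 * x + 1)) ^ 4 / 5
               - (stirling_lo x - stirling_lo (x + 1))) by lra.
  apply Rle_0_of_mul_pos with (D := x ^ 3 * (x + 1) ^ 3 * (2 * x + 1) ^ 4 * 2880)
    (N := 119 + t * (416 + t * (528 + t * (320 + t * 80)))).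
  - repeat apply Rmult_lt_0_compat; try apply pow_lt; lra.
  - unfold stirling_lo, t; field; lra.
  - horner_nonneg.
Qed.

Lemma stirling_hi_step_ge_series (x : R) : 1 / 2 <= x ->
  (/ (2 * x + 1)) ^ 2 / 3 + (/ (2 * x + 1)) ^ 4 / 5
    + (/ (2 * x + 1)) ^ 6 / (7 * (1 - (/ (2 * x + 1)) ^ 2))
  <= stirling_hi x - stirling_hi (x + 1).
Proof.
  intros Hx; set (t := x - 1 / 2); assert (Ht : 0 <= t) by (unfold t; lra).
  replace (1 - (/ (2 * x + 1)) ^ 2) with (4 * x * (x + 1) / (2 * x + 1) ^ 2) by (field; lra).
  enough (0 <= stirling_hi x - stirling_hi (x + 1)
               - ((/ (2 * x + 1)) ^ 2 / 3 + (/ (2 * x + 1)) ^ 4 / 5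
                  + (/ (2 * x + 1)) ^ 6 / (7 * (4 * x * (x + 1) / (2 * x + 1) ^ 2)))) by lra.
  apply Rle_0_of_mul_pos with (D := x ^ 5 * (x + 1) ^ 5 * (2 * x + 1) ^ 4 * 161280)
    (N := 9917 + t * (60616 + t * (153636 + t * (206784 + t * (156016 + t * (62592
          + t * 10432)))))).
  - repeat apply Rmult_lt_0_compat; try apply pow_lt; lra.
  - unfold stirling_hi, stirling_lo, t; field; lra.
  - horner_nonneg.
Qed.

Lemma stirling_lo_step_le (x : R) : 1 / 2 <= x ->
  stirling_lo x - stirling_lo (x + 1) <= (x + / 2) * ln (1 + 1 / x) - 1.
Proof.
  intros Hx; rewrite ln_one_add_inv_atanh by lra.
  pose proof (stirling_lo_step_le_series x Hx).
  set (y := / (2 * x + 1)) in *.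
  assert (Hy : 0 < y < 1).
  { unfold y; split; [apply Rinv_0_lt_compat; lra|].
    rewrite <- Rinv_1; apply Rinv_lt_contravar; lra. }
  apply Rle_trans with (2 * (y + y ^ 3 / 3 + y ^ 5 / 5) / (2 * y) - 1).
  - replace (2 * (y + y ^ 3 / 3 + y ^ 5 / 5) / (2 * y)) with (1 + y ^ 2 / 3 + y ^ 4 / 5)
      by (field; lra); lra.
  - apply Rplus_le_compat_r, Rmult_le_compat_r; [left; apply Rinv_0_lt_compat; lra|].
    apply two_atanh_ge_series; lra.
Qed.

Lemma stirling_hi_step_ge (x : R) : 1 / 2 <= x ->
  (x + / 2) * ln (1 + 1 / x) - 1 <= stirling_hi x - stirling_hi (x + 1).
Proof.
  intros Hx; rewrite ln_one_add_inv_atanh by lra.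
  pose proof (stirling_hi_step_ge_series x Hx).
  set (y := / (2 * x + 1)) in *.
  assert (Hy : 0 < y < 1).
  { unfold y; split; [apply Rinv_0_lt_compat; lra|].
    rewrite <- Rinv_1; apply Rinv_lt_contravar; lra. }
  apply Rle_trans
    with (2 * (y + y ^ 3 / 3 + y ^ 5 / 5 + y ^ 7 / (7 * (1 - y ^ 2))) / (2 * y) - 1).
  - apply Rplus_le_compat_r, Rmult_le_compat_r; [left; apply Rinv_0_lt_compat; lra|].
    apply two_atanh_le_series; lra.
  - replace (2 * (y + y ^ 3 / 3 + y ^ 5 / 5 + y ^ 7 / (7 * (1 - y ^ 2))) / (2 * y))
      with (1 + y ^ 2 / 3 + y ^ 4 / 5 + y ^ 6 / (7 * (1 - y ^ 2)))
      by (assert (y ^ 2 < 1) by nra; field; repeat split; lra); lra.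
Qed.

Lemma ln_Wallis_ratio (k : nat) : (1 <= k)%nat ->
  ln (PI * INR k * (Gamma_half (4 * k) / (4 ^ k * Gamma_half (2 * k) ^ 2)) ^ 2)
  = 2 * stirling_error (4 * k) - 4 * stirling_error (2 * k).
Proof.
  intros Hk; assert (Hk' := le_INR 1 k Hk); simpl in Hk'.
  pose proof PI_RGT_0; pose proof (Gamma_half_pos (2 * k)); pose proof (Gamma_half_pos (4 * k)).
  assert (H4 : 0 < 4 ^ k) by (apply pow_lt; lra).
  assert (HG2 : 0 < Gamma_half (2 * k) ^ 2) by (apply pow_lt; lra).
  assert (Hc : ln (Gamma_half (4 * k) / (4 ^ k * Gamma_half (2 * k) ^ 2))
               = ln (Gamma_half (4 * k)) - 2 * INR k * ln 2 - 2 * ln (Gamma_half (2 * k))).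
  { rewrite ln_div, ln_mult, !ln_pow by (try apply Rmult_lt_0_compat; lra).
    replace (ln 4) with (ln (2 * 2)) by (f_equal; ring).
    rewrite ln_mult by lra; change (INR 2) with (1 + 1); ring. }
  assert (0 < Gamma_half (4 * k) / (4 ^ k * Gamma_half (2 * k) ^ 2))
    by (apply Rdiv_lt_0_compat; [|apply Rmult_lt_0_compat]; lra).
  assert (0 < (Gamma_half (4 * k) / (4 ^ k * Gamma_half (2 * k) ^ 2)) ^ 2) by now apply pow_lt.
  assert (0 < PI * INR k) by (apply Rmult_lt_0_compat; lra).
  rewrite ln_mult, ln_mult, ln_pow, Hc by lra.
  unfold stirling_error.
  replace (INR (4 * k) / 2) with (2 * INR k) by (rewrite mult_INR; simpl; field).
  replace (INR (2 * k) / 2) with (INR k) by (rewrite mult_INR; simpl; field).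
  rewrite !ln_mult by lra; simpl; field.
Qed.

Lemma stirling_error_Wallis (k : nat) : (1 <= k)%nat ->
  Rabs (2 * stirling_error (4 * k) - 4 * stirling_error (2 * k)) <= 1 / (2 * INR k).
Proof.
  intros Hk; assert (Hk' := le_INR 1 k Hk); simpl in Hk'.
  rewrite <- ln_Wallis_ratio by exact Hk.
  destruct (Wallis_inequality k Hk) as [Hlo Hhi].
  set (v := PI * INR k * _ ^ 2) in *.
  assert (Hv : 0 < v) by (eapply Rlt_le_trans; [apply Rdiv_lt_0_compat|exact Hlo]; lra).
  destruct (ln_sub_bounds 1 v) as [Hl _]; try lra.
  assert (Hv1 : ln v <= 0) by (rewrite <- ln_1; apply ln_le; lra).
  rewrite ln_1 in Hl.
  assert ((v - 1) / v >= - (1 / (2 * INR k))).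
  { replace ((v - 1) / v) with (1 - / v) by (field; lra).
    enough (/ v <= 1 + 1 / (2 * INR k)) by lra.
    replace (1 + 1 / (2 * INR k)) with (/ (2 * INR k / (2 * INR k + 1))) by (field; lra).
    apply Rinv_le_contravar; [apply Rdiv_lt_0_compat|]; lra. }
  rewrite Rabs_left1; lra.
Qed.

Lemma is_lim_seq_0_of_abs_le (u : nat -> R) (C : R) :
  (forall n, Rabs (u n) <= C / (INR n + 1)) -> is_lim_seq u 0.
Proof.
  intros Hu; apply is_lim_seq_abs_0.
  assert (HC : is_lim_seq (fun n => C / (INR n + 1)) 0).
  { assert (H := is_lim_seq_scal_l _ C _
      (is_lim_seq_inv _ _ (proj1 (is_lim_seq_incr_1 _ _) is_lim_seq_INR) ltac:(discriminate))).
    replace (Rbar_mult C (Rbar_inv p_infty)) with (Finite 0) in H by (simpl; f_equal; ring).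
    apply is_lim_seq_ext with (2 := H); intros n; rewrite S_INR; reflexivity. }
  apply is_lim_seq_le_le with (fun _ => 0) (fun n => C / (INR n + 1)); auto using is_lim_seq_const.
  intros n; split; [apply Rabs_pos | apply Hu].
Qed.

Definition stirling_lo_gap (j : nat) : R := stirling_error j - stirling_lo (INR j / 2).
Definition stirling_hi_gap (j : nat) : R := stirling_hi (INR j / 2) - stirling_error j.

Lemma half_INR_ge (j : nat) : (1 <= j)%nat -> 1 / 2 <= INR j / 2.
Proof. intros Hj; apply (le_INR 1) in Hj; simpl in Hj; lra. Qed.

Lemma stirling_lo_gap_SS (j : nat) : (1 <= j)%nat ->
  stirling_lo_gap (S (S j)) <= stirling_lo_gap j.
Proof.
  intros Hj; unfold stirling_lo_gap.
  replace (INR (S (S j)) / 2) with (INR j / 2 + 1) by (rewrite !S_INR; field).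
  pose proof (stirling_error_SS j Hj); pose proof (stirling_lo_step_le _ (half_INR_ge j Hj)); lra.
Qed.

Lemma stirling_hi_gap_SS (j : nat) : (1 <= j)%nat ->
  stirling_hi_gap (S (S j)) <= stirling_hi_gap j.
Proof.
  intros Hj; unfold stirling_hi_gap.
  replace (INR (S (S j)) / 2) with (INR j / 2 + 1) by (rewrite !S_INR; field).
  pose proof (stirling_error_SS j Hj); pose proof (stirling_hi_step_ge _ (half_INR_ge j Hj)); lra.
Qed.

Lemma stirling_lo_hi_bounds (x : R) : 1 / 2 <= x ->
  0 <= stirling_lo x /\ stirling_lo x <= stirling_hi x /\ stirling_hi x <= 1 / x.
Proof.
  intros Hx; assert (H2 : 1 / 4 <= x ^ 2) by nra.
  assert (H4 : 1 / 16 <= x ^ 4) by (replace (x ^ 4) with (x ^ 2 * x ^ 2) by ring; nra).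
  assert (H5 : 0 < x ^ 5) by (apply pow_lt; lra).
  split; [|split].
  - apply Rle_0_of_mul_pos with (D := 360 * x ^ 3) (N := 30 * x ^ 2 - 1).
    + apply Rmult_lt_0_compat; [|apply pow_lt]; lra.
    + unfold stirling_lo; field; lra.
    + lra.
  - unfold stirling_hi; enough (0 < 1 / (1260 * x ^ 5)) by lra.
    apply Rdiv_lt_0_compat; lra.
  - enough (0 <= 1 / x - stirling_hi x) by lra.
    apply Rle_0_of_mul_pos with (D := 2520 * x ^ 5) (N := 2310 * x ^ 4 + 7 * x ^ 2 - 2).
    + lra.
    + unfold stirling_hi, stirling_lo; field; lra.
    + lra.
Qed.

Lemma is_lim_seq_stirling_lo_hi (j : nat) : (1 <= j)%nat ->
  is_lim_seq (fun N => stirling_lo (INR (j + 2 * N) / 2)) 0 /\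
  is_lim_seq (fun N => stirling_hi (INR (j + 2 * N) / 2)) 0.
Proof.
  intros Hj.
  assert (Hb : forall N, 0 <= stirling_lo (INR (j + 2 * N) / 2) /\
                         stirling_lo (INR (j + 2 * N) / 2) <= stirling_hi (INR (j + 2 * N) / 2) /\
                         stirling_hi (INR (j + 2 * N) / 2) <= 2 / (INR N + 1)).
  { intros N; destruct (stirling_lo_hi_bounds _ (half_INR_ge (j + 2 * N) ltac:(lia)))
      as [H1 [H2 H3]].
    pose proof (pos_INR N).
    assert (HN : INR N + 1 <= INR (j + 2 * N)).
    { rewrite plus_INR, mult_INR; apply (le_INR 1) in Hj; simpl in *; lra. }
    replace (1 / (INR (j + 2 * N) / 2)) with (2 / INR (j + 2 * N)) in H3 by (field; lra).
    assert (2 / INR (j + 2 * N) <= 2 / (INR N + 1)).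
    { apply Rmult_le_compat_l; [lra | apply Rinv_le_contravar; lra]. }
    lra. }
  split; apply is_lim_seq_0_of_abs_le with 2; intros N; specialize (Hb N);
    rewrite Rabs_right; lra.
Qed.

Lemma ex_lim_seq_stirling_error_even :
  exists D : R, is_lim_seq (fun k => stirling_error (2 * k + 2)) D.
Proof.
  assert (Hstep : forall k, (2 * S k + 2 = S (S (2 * k + 2)))%nat) by (intros; lia).
  destruct (ex_finite_lim_seq_decr (fun k => stirling_lo_gap (2 * k + 2)) (- stirling_hi_gap 2))
    as [D HD].
  - intros k; rewrite Hstep; apply stirling_lo_gap_SS; lia.
  - intros k.
    assert (Hhi : stirling_hi_gap (2 * k + 2) <= stirling_hi_gap 2).
    { apply (decreasing_prop (fun k => stirling_hi_gap (2 * k + 2)) 0 k); [|lia].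
      intros n; rewrite Hstep; apply stirling_hi_gap_SS; lia. }
    destruct (stirling_lo_hi_bounds (INR (2 * k + 2) / 2)) as [_ [Hlohi _]];
      [apply half_INR_ge; lia|].
    unfold stirling_lo_gap, stirling_hi_gap in *; lra.
  - exists (D + 0).
    apply is_lim_seq_ext with (fun k => stirling_lo_gap (2 * k + 2)
                                        + stirling_lo (INR (2 + 2 * k) / 2)).
    { intros k; unfold stirling_lo_gap; rewrite Nat.add_comm; ring. }
    apply is_lim_seq_plus'; [exact HD | apply (is_lim_seq_stirling_lo_hi 2); lia].
Qed.

Lemma is_lim_seq_stirling_error_Wallis :
  is_lim_seq (fun k => 2 * stirling_error (4 * S k) - 4 * stirling_error (2 * S k)) 0.
Proof.
  apply is_lim_seq_0_of_abs_le with 1; intros k.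
  eapply Rle_trans; [apply stirling_error_Wallis; lia|].
  rewrite S_INR; pose proof (pos_INR k).
  apply Rmult_le_compat_l; [lra | apply Rinv_le_contravar; lra].
Qed.

Lemma is_lim_seq_stirling_error_even : is_lim_seq (fun k => stirling_error (2 * k + 2)) 0.
Proof.
  destruct ex_lim_seq_stirling_error_even as [D HD].
  assert (H4k : is_lim_seq (fun k => 2 * stirling_error (4 * S k)) (2 * D)).
  { apply (is_lim_seq_scal_l _ 2 D).
    apply is_lim_seq_ext with (fun k => stirling_error (2 * (2 * k + 1) + 2)).
    { intros k; f_equal; lia. }
    apply (is_lim_seq_subseq (fun k => stirling_error (2 * k + 2)) _ (fun k => 2 * k + 1)%nat);
      [apply eventually_subseq; intros; lia | exact HD]. }
  assert (H2k : is_lim_seq (fun k => 4 * stirling_error (2 * S k)) (4 * D)).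
  { apply (is_lim_seq_scal_l _ 4 D), is_lim_seq_ext with (2 := HD); intros k; f_equal; lia. }
  assert (HW : Finite (2 * D - 4 * D) = Finite 0).
  { rewrite <- (is_lim_seq_unique _ _ (is_lim_seq_minus' _ _ _ _ H4k H2k)).
    apply is_lim_seq_unique, is_lim_seq_stirling_error_Wallis. }
  injection HW; intros; replace 0 with D by lra; exact HD.
Qed.

Lemma is_lim_seq_stirling_error (j : nat) : (1 <= j)%nat ->
  is_lim_seq (fun N => stirling_error (j + 2 * N)) 0.
Proof.
  intros Hj; destruct (Nat.Even_or_Odd j) as [[k Hk] | [k Hk]].
  - apply is_lim_seq_ext with (fun N => stirling_error (2 * (N + (k - 1)) + 2)).
    { intros N; f_equal; lia. }
    exact (proj1 (is_lim_seq_incr_n _ (k - 1) 0) is_lim_seq_stirling_error_even).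
  - replace (Finite 0) with (Finite (0 + 0)) by (f_equal; ring).
    apply is_lim_seq_ext with
      (fun N => stirling_error (2 * (N + k) + 2)
                + (stirling_error (S (2 * (N + k))) - stirling_error (S (S (2 * (N + k)))))).
    { intros N; replace (2 * (N + k) + 2)%nat with (S (S (2 * (N + k)))) by lia.
      replace (j + 2 * N)%nat with (S (2 * (N + k))) by lia; ring. }
    apply is_lim_seq_plus'.
    + exact (proj1 (is_lim_seq_incr_n _ k 0) is_lim_seq_stirling_error_even).
    + apply is_lim_seq_0_of_abs_le with 1; intros N.
      eapply Rle_trans; [apply stirling_error_S_SS_abs_le|].
      rewrite mult_INR, plus_INR; pose proof (pos_INR N); pose proof (pos_INR k).
      apply Rmult_le_compat_l; [lra | apply Rinv_le_contravar; simpl; lra].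
Qed.

Lemma stirling_error_bounds (j : nat) : (1 <= j)%nat ->
  stirling_lo (INR j / 2) <= stirling_error j <= stirling_hi (INR j / 2).
Proof.
  intros Hj; destruct (is_lim_seq_stirling_lo_hi j Hj) as [Hlo Hhi].
  assert (Hstep : forall N, (j + 2 * S N = S (S (j + 2 * N)))%nat) by (intros; lia).
  split.
  - enough (0 - 0 <= stirling_lo_gap (j + 2 * 0))
      by (unfold stirling_lo_gap in *; rewrite Nat.add_0_r in *; lra).
    apply (is_lim_seq_decr_compare (fun N => stirling_lo_gap (j + 2 * N))).
    + exact (is_lim_seq_minus' _ _ _ _ (is_lim_seq_stirling_error j Hj) Hlo).
    + intros N; rewrite Hstep; apply stirling_lo_gap_SS; lia.
  - enough (0 - 0 <= stirling_hi_gap (j + 2 * 0))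
      by (unfold stirling_hi_gap in *; rewrite Nat.add_0_r in *; lra).
    apply (is_lim_seq_decr_compare (fun N => stirling_hi_gap (j + 2 * N))).
    + exact (is_lim_seq_minus' _ _ _ _ Hhi (is_lim_seq_stirling_error j Hj)).
    + intros N; rewrite Hstep; apply stirling_hi_gap_SS; lia.
Qed.

Lemma stirling_error_div_bounds (j : nat) : (1 <= j)%nat ->
  stirling_lo (INR j / 2) / INR j <= stirling_error j / INR j <= stirling_hi (INR j / 2) / INR j.
Proof.
  intros Hj; assert (Hinv : 0 < / INR j)
    by (apply Rinv_0_lt_compat, (lt_INR 0); lia).
  destruct (stirling_error_bounds j Hj); split; apply Rmult_le_compat_r; lra.
Qed.

Lemma stirling_Psi_lower (x : R) : 1 <= x ->
  stirling_hi (x / 2) / x - stirling_lo ((x + 1) / 2) / (x + 1) < 1 / (3 * x ^ 3).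
Proof.
  intros Hx; set (t := x - 1); assert (Ht : 0 <= t) by (unfold t; lra).
  enough (0 < 1 / (3 * x ^ 3) - (stirling_hi (x / 2) / x - stirling_lo ((x + 1) / 2) / (x + 1)))
    by lra.
  apply Rlt_0_of_mul_pos with (D := x ^ 6 * (x + 1) ^ 4 * 630)
    (N := 2054 + t * (9960 + t * (19027 + t * (18674 + t * (10008 + t * (2786 + t * 315)))))).
  - repeat apply Rmult_lt_0_compat; try apply pow_lt; lra.
  - unfold stirling_hi, stirling_lo, t; field; lra.
  - apply Rplus_lt_le_0_compat; [lra | apply Rmult_le_pos; [lra | horner_nonneg]].
Qed.

Lemma stirling_Psi_upper (x : R) : 1 <= x ->
  stirling_hi ((x + 1) / 2) / (x + 1) - stirling_lo (x / 2) / x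
  < - (1 / (3 * x ^ 3)) + 1 / (2 * x ^ 4).
Proof.
  intros Hx; set (t := x - 1); assert (Ht : 0 <= t) by (unfold t; lra).
  enough (0 < - (1 / (3 * x ^ 3)) + 1 / (2 * x ^ 4)
              - (stirling_hi ((x + 1) / 2) / (x + 1) - stirling_lo (x / 2) / x)) by lra.
  apply Rlt_0_of_mul_pos with (D := x ^ 4 * (x + 1) ^ 6 * 630)
    (N := 10904 + t * (27768 + t * (28198 + t * (14272 + t * (3603 + t * 364))))).
  - repeat apply Rmult_lt_0_compat; try apply pow_lt; lra.
  - unfold stirling_hi, stirling_lo, t; field; lra.
  - apply Rplus_lt_le_0_compat; [lra | apply Rmult_le_pos; [lra | horner_nonneg]].
Qed.

Lemma ln_Omega (n : nat) : ln (Omega n) = INR n / 2 * ln PI - ln (Gamma_half n).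
Proof.
  unfold Omega, Rpower; fold (Gamma_half n).
  rewrite ln_div, ln_exp by (apply exp_pos || apply Gamma_half_pos); ring.
Qed.

Lemma ln_Omega_diff_sub_Psi (n : nat) : (1 <= n)%nat ->
  ln (Omega n) / INR n - ln (Omega (S n)) / INR (S n) - Psi (INR n)
  = stirling_error (S n) / INR (S n) - stirling_error n / INR n.
Proof.
  intros Hn; apply (le_INR 1) in Hn; simpl in Hn.
  rewrite !ln_Omega; unfold stirling_error, Psi; rewrite !S_INR; field; lra.
Qed.

Theorem theorem5 (n : nat) (Hn : (1 <= n)%nat) :
  Psi (INR n) - 1 / (3 * INR n ^ 3)
    < ln (Omega n) / INR n - ln (Omega (S n)) / INR (S n)
  /\ ln (Omega n) / INR n - ln (Omega (S n)) / INR (S n)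
    < Psi (INR n) - 1 / (3 * INR n ^ 3) + 1 / (2 * INR n ^ 4).
Proof.
  assert (Hx : 1 <= INR n) by (apply (le_INR 1); exact Hn).
  pose proof (ln_Omega_diff_sub_Psi n Hn).
  pose proof (stirling_error_div_bounds n Hn).
  pose proof (stirling_error_div_bounds (S n) ltac:(lia)).
  pose proof (stirling_Psi_lower (INR n) Hx).
  pose proof (stirling_Psi_upper (INR n) Hx).
  rewrite S_INR in *; split; lra.
Qed.
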